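(* Let $v$ and $k\ge 2$ be powers of the same prime. Then there exists an $\mathrm{RBIBD}(v,k,1)$ (and hence a $(k,r)$-regular LDPC code of length $vr/k$ and rate at least $(r-k)/r$ based on it, where $r=(v-1)/(k-1)$) if and only if $v-1\equiv 0 \pmod{k-1}$ and $v\equiv 0 \pmod{k}$.
   Context: A $\mathrm{BIBD}(v,k,\lambda)$ is a pair $(X,\mathcal{B})$ where $X$ is a set of $v$ points and $\mathcal{B}$ a collection of $k$-subsets (blocks) such that every pair of distinct points lies in exactly $\lambda$ blocks; each point then lies in the same number $r$ of blocks, with $\lambda(v-1)=r(k-1)$ and $bk=vr$ where $b=|\mathcal{B}|$. It is resolvable, written $\mathrm{RBIBD}(v,k,\lambda)$, if $\mathcal{B}$ can be partitioned into classes each of which partitions $X$. The LDPC code based on the design is the binary linear code having the $v\times b$ point-block incidence matrix as parity-check matrix $H$. The code is $(k,r)$-regular if all columns of $H$ have weight $k$ and all rows weight $r$; its rate is $(b-\mathrm{rank}_2(H))/b$, with $b$ the length. *)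

From HB Require Import structures.
From mathcomp Require Import all_boot all_order all_algebra.
Set Implicit Arguments. Unset Strict Implicit. Unset Printing Implicit Defensive.
Import GRing.Theory Num.Theory.

(* A design on the point set 'I_v with b blocks B j, j : 'I_b
   (indexing blocks allows a collection/multiset of blocks). *)

Definition is_BIBD (v k lam b : nat) (B : 'I_b -> {set 'I_v}) : Prop :=
  (forall j, #|B j| = k) /\
  (forall x y : 'I_v, x != y -> #|[set j | (x \in B j) && (y \in B j)]| = lam).

(* Resolvable: the blocks can be partitioned into classes (class j = cls j)
   such that each (nonempty) class partitions the point set, i.e. every
   point lies in exactly one block of the class. *)
Definition resolvable (v b : nat) (B : 'I_b -> {set 'I_v}) : Prop :=
  exists cls : 'I_b -> 'I_b,
    forall c : 'I_b, (exists j, cls j = c) ->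
      forall x : 'I_v, #|[set j | (cls j == c) && (x \in B j)]| = 1.

Definition is_RBIBD (v k lam b : nat) (B : 'I_b -> {set 'I_v}) : Prop :=
  is_BIBD k lam B /\ resolvable B.

Definition incidence_mx (v b : nat) (B : 'I_b -> {set 'I_v}) : 'M['F_2]_(v, b) :=
  \matrix_(i < v, j < b) (if i \in B j then 1%R else 0%R).

Definition ldpc_regular (v b : nat) (H : 'M['F_2]_(v, b)) (k r : nat) : Prop :=
  (forall j : 'I_b, #|[set i | H i j != 0%R]| = k) /\
  (forall i : 'I_v, #|[set j | H i j != 0%R]| = r).

Definition ldpc_rate (v b : nat) (H : 'M['F_2]_(v, b)) : rat :=
  ((b - \rank H)%:R / b%:R)%R.

From mathcomp Require Import all_boot all_order all_algebra all_field.
From mathcomp Require Import ring.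
Import GRing.Theory Num.Theory.
Set Implicit Arguments. Unset Strict Implicit.

(* Necessity is double counting: a point lies in r blocks with r (k - 1) = v - 1,
   and one parallel class partitions the v points into blocks of size k.
   Sufficiency: (p^c - 1) | (p^a - 1) forces c | a, so v = q^m with q = k = p^c,
   and the lines of the affine space F_q^m, grouped by direction, form an
   RBIBD(q^m, q, 1).  The code parameters then follow from b k = v r and
   rank H <= v. *)

Lemma dvdn_exp_subn1 p a c : 1 < p -> 0 < c -> (p ^ c - 1 %| p ^ a - 1) -> c %| a.
Proof.
move=> p_gt1 c_gt0 dvd_a; set d := p ^ c - 1 in dvd_a *.
have pX_gt0 n : 0 < p ^ n by rewrite expn_gt0 ltnW.
have pc_mod : p ^ c = 1 %[mod d] by apply/eqP; rewrite eqn_mod_dvd.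
have pa_mod : p ^ a = 1 %[mod d] by apply/eqP; rewrite eqn_mod_dvd.
have ps_mod : p ^ (a %% c) = 1 %[mod d].
  rewrite -pa_mod [in RHS](divn_eq a c) mulnC expnD expnM -modnMml.
  by rewrite -(modnXm _ d (p ^ c)) pc_mod modnXm exp1n modnMml mul1n.
have ps_lt : p ^ (a %% c) - 1 < d.
  have ps_ltc : p ^ (a %% c) < p ^ c by rewrite ltn_exp2l // ltn_mod.
  by rewrite ltn_sub2r // (leq_ltn_trans (pX_gt0 _) ps_ltc).
move/eqP: ps_mod; rewrite eqn_mod_dvd ?pX_gt0 //.
have [ps_eq1 _ | ps_gt0] := posnP (p ^ (a %% c) - 1).
  by rewrite /dvdn -leqn0 leqNgt -(ltn_exp2l _ _ p_gt1) expn0 -subn_gt0 ps_eq1.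
by move=> dvd_s; have := dvdn_leq ps_gt0 dvd_s; rewrite leqNgt ps_lt.
Qed.

Lemma sum_card_blocks (T I : finType) (P : {pred I}) (B : I -> {set T}) :
  \sum_(j in P) #|B j| = \sum_x #|[set j in P | x \in B j]|.
Proof.
under eq_bigr do rewrite -sum1_card.
rewrite (exchange_big_dep predT) //=; apply: eq_bigr => x _.
by rewrite -sum1_card; apply: eq_bigl => j; rewrite inE.
Qed.

Section Designs.
Variables (v b : nat) (B : 'I_b -> {set 'I_v}).

Lemma BIBD_replication k lam : is_BIBD k lam B ->
  forall x, #|[set j | x \in B j]| * (k - 1) = lam * (v - 1).
Proof.
move=> [card_B pair_B] x.
have := sum_card_blocks [pred j | x \in B j] (fun j => B j :\ x).
rewrite (eq_bigr (fun _ => k - 1)); last first.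
  by move=> j; rewrite inE => xBj; rewrite -(card_B j) (cardsD1 x (B j)) xBj add1n subn1.
rewrite sum_nat_const (bigD1 x) //=.
have -> : #|[set j | (x \in B j) && (x \in B j :\ x)]| = 0.
  by apply/eqP; rewrite cards_eq0; apply/eqP/setP => j; rewrite !inE eqxx andbF.
rewrite (eq_bigr (fun _ => lam)) => [|y y_x]; last first.
  rewrite -(pair_B x y); last by rewrite eq_sym.
  by apply: eq_card => j; rewrite !inE y_x.
rewrite add0n sum_nat_const cardC1 card_ord [_.-1 * _]mulnC -subn1 => <-.
by congr (_ * _); apply: eq_card => j; rewrite inE.
Qed.

Lemma design_count k r : (forall j, #|B j| = k) ->
  (forall x, #|[set j | x \in B j]| = r) -> b * k = v * r.
Proof.
move=> card_B rep_B; have := sum_card_blocks [set: 'I_b] B.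
rewrite (eq_bigr (fun _ => k)) // sum_nat_const cardsT card_ord => ->.
rewrite (eq_bigr (fun _ => r)) => [|x _]; last first.
  by rewrite -(rep_B x); apply: eq_card => j; rewrite !inE.
by rewrite big_const_ord iter_addn_0 mulnC.
Qed.

Lemma resolvable_block_dvd k : (forall j, #|B j| = k) -> resolvable B -> 0 < b -> k %| v.
Proof.
move=> card_B [cls parB] b_gt0; pose j0 := Ordinal b_gt0.
have := sum_card_blocks [pred j | cls j == cls j0] B.
rewrite (eq_bigr (fun _ => k)) // sum_nat_const (eq_bigr (fun _ => 1)) => [|x _].
  by rewrite big_const_ord iter_addn_0 mul1n => <-; apply: dvdn_mull.
by rewrite -(parB (cls j0) (ex_intro _ j0 erefl) x); apply: eq_card => j; rewrite !inE.
Qed.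

Lemma BIBD_blocks_gt0 k lam : is_BIBD k lam B -> 0 < lam -> 1 < v -> 0 < b.
Proof.
move=> [_ pair_B] lam_gt0 v_gt1.
pose x : 'I_v := Ordinal (ltnW v_gt1); pose y : 'I_v := Ordinal v_gt1.
have := max_card (mem [set j | (x \in B j) && (y \in B j)]).
by rewrite card_ord pair_B //; apply: leq_trans.
Qed.

End Designs.

Lemma card_enum_val_set (T : finType) (S : {set T}) (Q : pred T) :
  #|[set j : 'I_#|S| | Q (enum_val j)]| = #|[set l in S | Q l]|.
Proof.
rewrite -(card_imset _ enum_val_inj); apply: eq_card => l; rewrite inE.
apply/imsetP/andP => [[j + ->]|[lS Ql]]; first by rewrite inE enum_valP.
by exists (enum_rank_in lS l); rewrite ?inE enum_rankK_in.
Qed.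

Lemma RBIBD_of_parallelism (P : finType) (v k lam : nat) (S : {set {set P}})
    (par : {set P} -> {set P}) :
  #|P| = v ->
  (forall l, l \in S -> #|l| = k) ->
  (forall x y : P, x != y -> #|[set l in S | (x \in l) && (y \in l)]| = lam) ->
  (forall l, l \in S -> par l \in S) ->
  (forall l0, l0 \in S -> forall x, #|[set l in S | (par l == par l0) && (x \in l)]| = 1) ->
  exists b (B : 'I_b -> {set 'I_v}), is_RBIBD k lam B.
Proof.
move=> <- card_S pair_S par_S class_S.
pose g : 'I_#|P| -> P := enum_val.
have card_preim (l : {set P}) : #|[set i | g i \in l]| = #|l|.
  rewrite -(card_imset _ enum_val_inj); apply: eq_card => z.
  apply/imsetP/idP => [[i + ->]|zl]; first by rewrite inE.
  by exists (enum_rank z); rewrite ?inE /g enum_rankK.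
exists #|S|, (fun j : 'I_#|S| => [set i | g i \in (enum_val j : {set P})]).
split; first split.
- by move=> j; rewrite card_preim card_S // enum_valP.
- move=> x y xy; rewrite -(pair_S (g x) (g y)) ?(inj_eq enum_val_inj) //.
  by rewrite -card_enum_val_set; apply: eq_card => j; rewrite !inE.
exists (fun j => enum_rank_in (enum_valP j) (par (enum_val j))) => _ [j0 <-] x.
rewrite -(class_S _ (enum_valP j0) (g x)) -card_enum_val_set.
apply: eq_card => j; rewrite !inE -(inj_eq enum_val_inj) !enum_rankK_in //.
all: exact/par_S/enum_valP.
Qed.

Section AffineLines.
Variables (F : finFieldType) (n : nat).
Implicit Types (x y z d e : 'rV[F]_n) (l : {set 'rV[F]_n}).
Local Open Scope ring_scope.

Definition line x d := [set x + t *: d | t : F].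
Definition lines := [set l | [exists x, exists d, (d != 0) && (l == line x d)]].
Definition direction l := [set y - z | y in l, z in l].

Lemma linesP l : reflect (exists x d, d != 0 /\ l = line x d) (l \in lines).
Proof.
rewrite inE; apply: (iffP existsP) => [[x /existsP[d /andP[d0 /eqP ->]]]|[x [d [d0 ->]]]].
  by exists x, d.
by exists x; apply/existsP; exists d; rewrite d0 eqxx.
Qed.

Lemma line_in_lines x d : d != 0 -> line x d \in lines.
Proof. by move=> d0; apply/linesP; exists x, d. Qed.

Lemma card_line x d : d != 0 -> #|line x d| = #|F|.
Proof.
move=> d0; rewrite card_imset // => s t /addrI /eqP.
by rewrite -subr_eq0 -scalerBl scaler_eq0 (negbTE d0) orbF subr_eq0 => /eqP.
Qed.

Lemma mem_line x d : x \in line x d.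
Proof. by apply/imsetP; exists 0; rewrite ?scale0r ?addr0. Qed.

Lemma mem_line_sub x d z : (z \in line x d) = (z - x \in line 0 d).
Proof.
apply/imsetP/imsetP => [[t _ ->]|[t _ E]]; exists t => //.
  by rewrite add0r addrC addKr.
by rewrite -(subrK x z) E add0r addrC.
Qed.

Lemma line0_subr d y z : y \in line 0 d -> z \in line 0 d -> y - z \in line 0 d.
Proof.
move=> /imsetP[s _ ->] /imsetP[t _ ->]; apply/imsetP; exists (s - t) => //.
by rewrite !add0r scalerBl.
Qed.

Lemma line_from_mem x y d : y \in line x d -> line x d = line y d.
Proof.
rewrite mem_line_sub => yx; apply/setP => z; rewrite mem_line_sub [RHS]mem_line_sub.
apply/idP/idP => zx; first by have := line0_subr zx yx; rewrite opprB addrA subrK.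
have := line0_subr zx (line0_subr (mem_line 0 d) yx).
by rewrite sub0r opprK addrA subrK.
Qed.

Lemma line0_scale u d : u != 0 -> line 0 (u *: d) = line 0 d.
Proof.
move=> u0; apply/setP => z; apply/imsetP/imsetP => [[t _ ->]|[t _ ->]].
  by exists (t * u) => //; rewrite scalerA.
by exists (t / u) => //; rewrite scalerA mulfVK.
Qed.

Lemma line_dir_eq x d e : line 0 d = line 0 e -> line x d = line x e.
Proof. by move=> de; apply/setP => z; rewrite !(mem_line_sub x) de. Qed.

Lemma line_through x d y z :
  y != z -> y \in line x d -> z \in line x d -> line x d = line y (z - y).
Proof.
move=> yz yx zx; rewrite (line_from_mem yx); rewrite (line_from_mem yx) mem_line_sub in zx.
case/imsetP: zx => t _; rewrite add0r => zyE.
apply: line_dir_eq; rewrite zyE line0_scale //; apply: contra yz => /eqP t0.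
by rewrite -subr_eq0 -opprB oppr_eq0 zyE t0 scale0r.
Qed.

Lemma direction_line x d : direction (line x d) = line 0 d.
Proof.
apply/setP => w; apply/imset2P/imsetP => [[y z /imsetP[s _ ->] /imsetP[t _ ->] ->]|[u _ ->]].
  by exists (s - t) => //; rewrite add0r opprD addrACA subrr add0r scalerBl.
exists (x + u *: d) x; rewrite ?mem_line //; first by apply/imsetP; exists u.
by rewrite add0r addrC addKr.
Qed.

Lemma affine_RBIBD : exists b (B : 'I_b -> {set 'I_(#|F| ^ n)%N}), is_RBIBD #|F| 1 B.
Proof.
apply: (@RBIBD_of_parallelism _ _ _ _ lines direction).
- by rewrite card_mx mul1n.
- by move=> l /linesP[x [d [d0 ->]]]; rewrite card_line.
- move=> x y xy; apply/eqP/cards1P; exists (line x (y - x)); apply/setP => l.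
  rewrite in_set1 in_set; apply/andP/eqP => [[/linesP[x' [d [d0 ->]]] /andP[]]|->].
    exact: line_through.
  rewrite line_in_lines ?subr_eq0 1?eq_sym // mem_line.
  by split=> //; apply/imsetP; exists 1; rewrite ?scale1r 1?addrC ?subrK.
- by move=> l /linesP[x [d [d0 ->]]]; rewrite direction_line line_in_lines.
- move=> l0 /linesP[x0 [d0 [d0_neq0 ->]]] x; apply/eqP/cards1P; exists (line x d0).
  apply/setP => l; rewrite in_set1 in_set.
  apply/andP/eqP => [[/linesP[x' [d [d_neq0 ->]]] /andP[/eqP dir_eq xl]]|->].
    rewrite (line_from_mem xl); apply: line_dir_eq.
    by rewrite -(direction_line x' d) dir_eq direction_line.
  by rewrite line_in_lines // mem_line !direction_line eqxx.
Qed.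

End AffineLines.

Lemma incidence_mx_regular v b (B : 'I_b -> {set 'I_v}) k r :
  (forall j, #|B j| = k) -> (forall x, #|[set j | x \in B j]| = r) ->
  ldpc_regular (incidence_mx B) k r.
Proof.
move=> card_B rep_B; split=> [j|x]; [rewrite -(card_B j) | rewrite -(rep_B x)];
  by apply: eq_card => i; rewrite !inE mxE; case: ifP; rewrite ?oner_eq0 ?eqxx.
Qed.

(* rank H <= v, and (b - v) / b = (r - k) / r because b k = v r. *)
Lemma ldpc_rate_ge v b (H : 'M['F_2]_(v, b)) k r :
  0 < v -> 0 < r -> b * k = v * r -> ((r%:R - k%:R) / r%:R <= ldpc_rate H)%R.
Proof.
move=> v_gt0 r_gt0 bk_vr.
have [b_gt0 k_gt0] : 0 < b /\ 0 < k by apply/andP; rewrite -muln_gt0 bk_vr muln_gt0 v_gt0.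
have -> : ((r%:R - k%:R) / r%:R = (b%:R - v%:R) / b%:R :> rat)%R.
  have b_eq : (b%:R = v%:R * r%:R / k%:R :> rat)%R.
    by rewrite -natrM -bk_vr natrM mulfK // pnatr_eq0 -lt0n.
  by rewrite b_eq; field; rewrite !pnatr_eq0 -!lt0n k_gt0 r_gt0 v_gt0.
rewrite /ldpc_rate ler_pM2r ?invr_gt0 ?ltr0n // natrB ?rank_leq_col //.
by rewrite lerD2l lerN2 ler_nat rank_leq_row.
Qed.

Theorem theorem3 (p a c : nat) :
  prime p -> 1 <= a -> 2 <= p ^ c ->
  let v := p ^ a in let k := p ^ c in let r := (v - 1) %/ (k - 1) in
  (exists (b : nat) (B : 'I_b -> {set 'I_v}),
      is_RBIBD k 1 B /\
      ldpc_regular (incidence_mx B) k r /\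
      b = v * r %/ k /\
      ((r%:R - k%:R) / r%:R <= ldpc_rate (incidence_mx B))%R)
  <-> ((k - 1) %| (v - 1) /\ k %| v).
Proof.
move=> p_prime a_gt0 k_gt1 v k r.
have p_gt1 := prime_gt1 p_prime.
have v_gt1 : 1 < v by rewrite -(expn0 p) ltn_exp2l.
have x0 : 'I_v := Ordinal (ltnW v_gt1).
split=> [[b [B [[bibd resB] _]]] | [dvd_v1 _]].
  split; first by rewrite -(mul1n (v - 1)) -(BIBD_replication bibd x0) dvdn_mull.
  exact: resolvable_block_dvd bibd.1 resB (BIBD_blocks_gt0 bibd _ v_gt1).
have c_gt0 : 0 < c by rewrite lt0n; apply: contraTneq k_gt1 => c0; rewrite /k c0.
have [F _ card_F] := pPrimePowerField p_prime c_gt0.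
have [b [B rbibd]] : exists b (B : 'I_b -> {set 'I_v}), is_RBIBD k 1 B.
  rewrite /v /k -(divnK (dvdn_exp_subn1 p_gt1 c_gt0 dvd_v1)) mulnC expnM -card_F.
  exact: affine_RBIBD.
have rep_B x : #|[set j | x \in B j]| = r.
  by rewrite /r -[v - 1]mul1n -(BIBD_replication rbibd.1 x) mulnK // subn_gt0.
have bk_vr := design_count rbibd.1.1 rep_B.
have r_gt0 : 0 < r.
  have : 0 < v - 1 by rewrite subn_gt0.
  by rewrite -(mul1n (v - 1)) -(BIBD_replication rbibd.1 x0) rep_B muln_gt0 => /andP[].
exists b, B; split=> //; split; first exact: incidence_mx_regular rbibd.1.1 rep_B.
split; first by rewrite -bk_vr mulnK // ltnW.
exact: ldpc_rate_ge (ltnW v_gt1) r_gt0 bk_vr.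
Qed.
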